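(* Consider the ship dynamics $$M\dot\nu(t) + D(\nu(t))\nu(t) + C(\nu(t))\nu(t) = \tau(t) + \tau_d(t), \qquad \nu=[u,v,r]^\top\in\mathbb{R}^3,$$ with $M$, $D$, $C$, $\kappa_{ij}$, $\sigma$, $\Gamma=\mathrm{diag}(\Gamma_1,\Gamma_2,\Gamma_3)$ and $T$ as described in the context, and assume $\kappa_{23}\kappa_{32}<\kappa_{22}\kappa_{33}$ (so $\sigma>0$) and $\Gamma_1,\Gamma_2,\Gamma_3>0$. Run the disturbance observer $$\hat\tau_d(t) = \zeta(t) + T\nu(t),\qquad \dot\zeta(t) = -T M^{-1}\big(\tau(t) + \hat\tau_d(t) - D(\nu(t))\nu(t) - C(\nu(t))\nu(t)\big),$$ along a solution $(\nu,\zeta)$ defined for $t\ge0$. Suppose the disturbance $\tau_d$ is continuously differentiable (not necessarily constant) with $\|\dot\tau_d(t)\|\le\theta$ for all $t\ge0$, and suppose $\lambda_{\min}(\Gamma)\sigma>\tfrac12$, where $\lambda_{\min}(\Gamma)=\min(\Gamma_1,\Gamma_2,\Gamma_3)$. Then the estimation error $z(t)=\tau_d(t)-\hat\tau_d(t)$ converges exponentially into the closed ball centered at the origin with radius $$r_b=\frac{\theta}{\sqrt{2\lambda_{\min}(\Gamma)\sigma-1}};$$ precisely, with $a=2\lambda_{\min}(\Gamma)\sigma-1>0$, for all $t\ge 0$, $$\|z(t)\|^2\le e^{-at}\|z(0)\|^2 + r_b^2\big(1-e^{-at}\big).$$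
   Context: $\nu=[u,v,r]^\top$ are the surge, sway and yaw-rate velocities of the ship, $\tau(t)\in\mathbb{R}^3$ is the control input and $\tau_d(t)\in\mathbb{R}^3$ the environmental disturbance. The mass matrix is constant, symmetric, positive definite, of the form $M=\begin{bmatrix} m_{11}&0&0\\0&m_{22}&m_{23}\\0&m_{32}&m_{33}\end{bmatrix}$ with positive entries, and its inverse is written $M^{-1}=\begin{bmatrix} \kappa_{11}&0&0\\0&\kappa_{22}&\kappa_{23}\\0&\kappa_{32}&\kappa_{33}\end{bmatrix}$. $D(\nu)$ is the nonlinear damping matrix $\begin{bmatrix} d_{11}&0&0\\0&d_{22}&d_{23}\\0&d_{32}&d_{33}\end{bmatrix}$ with $d_{11}=-X_u-X_{|u|u}-X_{uuu}u^2$, $d_{22}=-Y_v-Y_{|v|v}-Y_{|r|v}|r|-Y_{vvv}v^2$, $d_{23}=-Y_r-Y_{|v|r}|v|-Y_{|r|r}|r|$, $d_{32}=-N_v-N_{|v|v}|v|-N_{|r|v}|r|$, $d_{33}=-N_r-N_{|v|r}|v|-N_{|r|r}|r|-N_{rrr}r^2$ (real hydrodynamic constants), and $C(\nu)=\begin{bmatrix}0&0&c_{13}\\0&0&c_{23}\\-c_{13}&-c_{23}&0\end{bmatrix}$ with $c_{13}=-m_{22}v-m_{23}r$, $c_{23}=m_{11}u$. Define $\sigma = 1-\frac{\kappa_{23}\kappa_{32}}{\kappa_{22}\kappa_{33}}$, adaptive gains $\Gamma_1,\Gamma_2,\Gamma_3$, $\Gamma=\mathrm{diag}(\Gamma_1,\Gamma_2,\Gamma_3)$,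 and $$T=\begin{bmatrix}\Gamma_1\frac{\sigma}{\kappa_{11}}&0&0\\ 0&\frac{\Gamma_2}{\kappa_{22}}&-\Gamma_2\frac{\kappa_{23}}{\kappa_{22}\kappa_{33}}\\ 0&-\Gamma_3\frac{\kappa_{32}}{\kappa_{22}\kappa_{33}}&\frac{\Gamma_3}{\kappa_{33}}\end{bmatrix}.$$ $\|\cdot\|$ is the Euclidean norm. *)

From Stdlib Require Import Reals Lra.
From Coquelicot Require Import Coquelicot.
Open Scope R_scope.

Record hydro : Type := mkHydro {
  X_u : R; X_absu_u : R; X_uuu : R;
  Y_v : R; Y_absv_v : R; Y_absr_v : R; Y_vvv : R;
  Y_r : R; Y_absv_r : R; Y_absr_r : R;
  N_v : R; N_absv_v : R; N_absr_v : R;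
  N_r : R; N_absv_r : R; N_absr_r : R; N_rrr : R }.

Definition d11 (h : hydro) (u v r : R) : R :=
  - X_u h - X_absu_u h * Rabs u - X_uuu h * u ^ 2.
Definition d22 (h : hydro) (u v r : R) : R :=
  - Y_v h - Y_absv_v h * Rabs v - Y_absr_v h * Rabs r - Y_vvv h * v ^ 2.
Definition d23 (h : hydro) (u v r : R) : R :=
  - Y_r h - Y_absv_r h * Rabs v - Y_absr_r h * Rabs r.
Definition d32 (h : hydro) (u v r : R) : R :=
  - N_v h - N_absv_v h * Rabs v - N_absr_v h * Rabs r.
Definition d33 (h : hydro) (u v r : R) : R :=
  - N_r h - N_absv_r h * Rabs v - N_absr_r h * Rabs r - N_rrr h * r ^ 2.

Definition Dnu1 h u v r := d11 h u v r * u.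
Definition Dnu2 h u v r := d22 h u v r * v + d23 h u v r * r.
Definition Dnu3 h u v r := d32 h u v r * v + d33 h u v r * r.

Definition c13 (m11 m22 m23 : R) (u v r : R) : R := - m22 * v - m23 * r.
Definition c23 (m11 m22 m23 : R) (u v r : R) : R := m11 * u.
Definition Cnu1 m11 m22 m23 u v r := c13 m11 m22 m23 u v r * r.
Definition Cnu2 m11 m22 m23 u v r := c23 m11 m22 m23 u v r * r.
Definition Cnu3 m11 m22 m23 u v r :=
  - c13 m11 m22 m23 u v r * u - c23 m11 m22 m23 u v r * v.

Definition sigma_ship (k22 k23 k32 k33 : R) : R := 1 - (k23 * k32) / (k22 * k33).

Definition T11 (G1 k11 k22 k23 k32 k33 : R) := G1 * sigma_ship k22 k23 k32 k33 / k11.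
Definition T22 (G2 k22 : R) := G2 / k22.
Definition T23 (G2 k22 k23 k33 : R) := - G2 * k23 / (k22 * k33).
Definition T32 (G3 k22 k32 k33 : R) := - G3 * k32 / (k22 * k33).
Definition T33 (G3 k33 : R) := G3 / k33.

Definition lam_min (G1 G2 G3 : R) : R := Rmin G1 (Rmin G2 G3).

Definition nrm2 (a b c : R) : R := a ^ 2 + b ^ 2 + c ^ 2.
Definition nrm (a b c : R) : R := sqrt (nrm2 a b c).

From Stdlib Require Import Reals Lra.
From Coquelicot Require Import Coquelicot.
Open Scope R_scope.

(* The gain is T = sigma Gamma M, i.e. T M^-1 = sigma Gamma.  Substituting the ship
   dynamics into the observer, the observer input tau + hat tau_d - D nu - C nu equals
   M nu' - z, so the error obeys the decoupled equation z' = tau_d' - sigma Gamma z.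
   For V = |z|^2, Young's inequality 2 z.tau_d' <= |z|^2 + theta^2 gives
   V' <= -a V + theta^2, and then e^(a t) (V - theta^2/a) is nonincreasing on (0, oo)
   and right-continuous at 0. *)

Definition right_continuous (f : R -> R) (x : R) : Prop :=
  filterlim f (at_right x) (locally (f x)).

Lemma right_continuous_const (c x : R) : right_continuous (fun _ => c) x.
Proof. apply filterlim_const. Qed.

Lemma right_continuous_plus (f g : R -> R) (x : R) :
  right_continuous f x -> right_continuous g x -> right_continuous (fun t => f t + g t) x.
Proof.
  intros Hf Hg; apply (filterlim_comp_2 f g Rplus Hf Hg).
  exact (filterlim_plus (f x) (g x)).
Qed.

Lemma right_continuous_mult (f g : R -> R) (x : R) :
  right_continuous f x -> right_continuous g x -> right_continuous (fun t => f t * g t) x.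
Proof.
  intros Hf Hg; apply (filterlim_comp_2 f g Rmult Hf Hg).
  exact (filterlim_mult (f x) (g x)).
Qed.

Lemma right_continuous_opp (f : R -> R) (x : R) :
  right_continuous f x -> right_continuous (fun t => - f t) x.
Proof. intros Hf; exact (filterlim_comp _ _ _ f Ropp _ _ _ Hf (filterlim_opp (f x))). Qed.

Lemma right_continuous_of_continuous (f : R -> R) (x : R) :
  continuous f x -> right_continuous f x.
Proof.
  intros Hf; apply (filterlim_filter_le_1 f (F := locally x)); [|exact Hf].
  intros P [d Hd]; exists d; intros y Hy _; exact (Hd y Hy).
Qed.

Ltac solve_right_continuous :=
  repeat first
    [ assumption
    | apply right_continuous_const
    | apply right_continuous_plus
    | apply right_continuous_opp
    | apply right_continuous_mult ].

Lemma le_start_of_derive_nonpos (f df : R -> R) (x0 : R) :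
  (forall x, x0 < x -> is_derive f x (df x)) -> (forall x, x0 < x -> df x <= 0) ->
  right_continuous f x0 -> forall x, x0 <= x -> f x <= f x0.
Proof.
  intros Hder Hneg Hcont.
  assert (Hmono : forall y x, x0 < y -> y <= x -> f x <= f y).
  { intros y x Hy Hyx; destruct (Rle_lt_or_eq_dec y x Hyx) as [Hlt | <-]; [|lra].
    destruct (MVT_gen f y x df) as [c [Hc Heq]].
    - intros z Hz; apply Hder; rewrite Rmin_left in Hz; lra.
    - intros z Hz; apply continuity_pt_filterlim, (ex_derive_continuous f).
      exists (df z); apply Hder; rewrite Rmin_left in Hz; lra.
    - rewrite Rmin_left in Hc by lra.
      assert (df c <= 0) by (apply Hneg; lra); nra. }
  intros x Hx; destruct (Rle_lt_or_eq_dec x0 x Hx) as [Hlt | <-]; [|lra].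
  apply (filterlim_le (F := at_right x0) (fun _ => f x) f (f x) (f x0));
    [| apply filterlim_const | exact Hcont].
  exists (mkposreal (x - x0) ltac:(lra)); intros y Hy Hy0.
  apply Hmono; [exact Hy0|].
  apply Rabs_lt_between' in Hy; simpl in Hy; lra.
Qed.

Lemma affine_differential_inequality (V dV : R -> R) (a b x0 : R) :
  a <> 0 ->
  (forall x, x0 < x -> is_derive V x (dV x)) -> (forall x, x0 < x -> dV x <= - a * V x + b) ->
  right_continuous V x0 ->
  forall x, x0 <= x -> V x <= exp (- a * (x - x0)) * V x0 + b / a * (1 - exp (- a * (x - x0))).
Proof.
  intros Ha Hder Hrate Hcont x Hx.
  set (E := fun y => exp (a * (y - x0))).
  assert (HE : forall y, is_derive E y (a * E y)).
  { intros y; unfold E; auto_derive; [easy | unfold Rminus; ring]. }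
  assert (Hmono : E x * (V x - b / a) <= E x0 * (V x0 - b / a)).
  { apply (le_start_of_derive_nonpos (fun y => E y * (V y - b / a))
             (fun y => E y * (dV y + a * V y - b))).
    - intros y Hy.
      replace (E y * (dV y + a * V y - b)) with (a * E y * (V y - b / a) + E y * (dV y - 0))
        by (field; exact Ha).
      apply (is_derive_mult E (fun y => V y - b / a)); [apply HE | | apply Rmult_comm].
      apply (is_derive_minus V (fun _ => b / a)); [apply Hder; exact Hy | exact (is_derive_const (b / a) y)].
    - intros y Hy; apply Rmult_le_0_l; [apply Rlt_le, exp_pos | specialize (Hrate y Hy); lra].
    - unfold E; solve_right_continuous.
      apply right_continuous_of_continuous.
      apply (ex_derive_continuous (fun y => exp (a * (y - x0)))); auto_derive; easy.
    - exact Hx. }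
  unfold E in Hmono; rewrite Rminus_diag, Rmult_0_r, exp_0, Rmult_1_l in Hmono.
  replace (- a * (x - x0)) with (- (a * (x - x0))) by ring; rewrite exp_Ropp.
  assert (Hpos := exp_pos (a * (x - x0))); revert Hmono Hpos.
  generalize (exp (a * (x - x0))); intros e Hmono Hpos.
  apply (Rmult_le_reg_l e); [exact Hpos|].
  replace (e * (/ e * V x0 + b / a * (1 - / e))) with (V x0 - b / a + e * (b / a)) by (field; lra).
  rewrite Rmult_minus_distr_l in Hmono; lra.
Qed.

Lemma nrm_sqr (a b c : R) : nrm a b c ^ 2 = nrm2 a b c.
Proof.
  unfold nrm; rewrite pow2_sqrt; [reflexivity|].
  unfold nrm2; nra.
Qed.

Lemma nrm2_le_sqr (a b c th : R) : nrm a b c <= th -> nrm2 a b c <= th ^ 2.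
Proof. intros H; rewrite <- nrm_sqr; apply pow_incr; split; [apply sqrt_pos | exact H]. Qed.

Lemma is_derive_nrm2 (f1 f2 f3 : R -> R) (x d1 d2 d3 : R) :
  is_derive f1 x d1 -> is_derive f2 x d2 -> is_derive f3 x d3 ->
  is_derive (fun y => nrm2 (f1 y) (f2 y) (f3 y)) x (2 * (f1 x * d1 + f2 x * d2 + f3 x * d3)).
Proof.
  intros H1 H2 H3; unfold nrm2.
  replace (2 * (f1 x * d1 + f2 x * d2 + f3 x * d3))
    with (INR 2 * d1 * f1 x ^ 1 + INR 2 * d2 * f2 x ^ 1 + INR 2 * d3 * f3 x ^ 1)
    by (simpl; ring).
  apply (is_derive_plus (fun y => f1 y ^ 2 + f2 y ^ 2) (fun y => f3 y ^ 2));
    [apply (is_derive_plus (fun y => f1 y ^ 2) (fun y => f2 y ^ 2)) |];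
    apply is_derive_pow; assumption.
Qed.

Lemma right_continuous_nrm2 (f1 f2 f3 : R -> R) (x : R) :
  right_continuous f1 x -> right_continuous f2 x -> right_continuous f3 x ->
  right_continuous (fun y => nrm2 (f1 y) (f2 y) (f3 y)) x.
Proof. intros; unfold nrm2; cbn [pow]; solve_right_continuous. Qed.

Lemma sqr_rate_le (l g e d : R) : l <= g -> 2 * e * (d - g * e) <= (1 - 2 * l) * e ^ 2 + d ^ 2.
Proof.
  intros Hlg.
  assert (0 <= (g - l) * e ^ 2) by (apply Rmult_le_pos; [lra | apply pow2_ge_0]).
  assert (0 <= (e - d) ^ 2) by apply pow2_ge_0.
  nra.
Qed.

Lemma nrm2_rate_le (l g1 g2 g3 e1 e2 e3 d1 d2 d3 th : R) :
  l <= g1 -> l <= g2 -> l <= g3 -> nrm2 d1 d2 d3 <= th ^ 2 ->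
  2 * (e1 * (d1 - g1 * e1) + e2 * (d2 - g2 * e2) + e3 * (d3 - g3 * e3))
    <= - (2 * l - 1) * nrm2 e1 e2 e3 + th ^ 2.
Proof.
  intros H1 H2 H3 Hd; unfold nrm2 in *.
  pose proof (sqr_rate_le l g1 e1 d1 H1); pose proof (sqr_rate_le l g2 e2 d2 H2);
  pose proof (sqr_rate_le l g3 e3 d3 H3); nra.
Qed.

Lemma lam_min_le (G1 G2 G3 : R) :
  lam_min G1 G2 G3 <= G1 /\ lam_min G1 G2 G3 <= G2 /\ lam_min G1 G2 G3 <= G3.
Proof.
  unfold lam_min; repeat split; [apply Rmin_l | |];
    (eapply Rle_trans; [apply Rmin_r | first [apply Rmin_l | apply Rmin_r]]).
Qed.

Lemma lam_min_pos (G1 G2 G3 : R) : 0 < G1 -> 0 < G2 -> 0 < G3 -> 0 < lam_min G1 G2 G3.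
Proof. intros; unfold lam_min; repeat apply Rmin_pos; assumption. Qed.

Lemma sqr_div_sqrt (x a : R) : 0 < a -> (x / sqrt a) ^ 2 = x ^ 2 / a.
Proof.
  intros Ha; unfold Rdiv; rewrite Rpow_mult_distr, pow_inv, pow2_sqrt; [reflexivity | lra].
Qed.

Lemma right_inverse2_adj (m22 m23 m32 m33 k22 k23 k32 k33 : R) :
  m22 * k22 + m23 * k32 = 1 -> m22 * k23 + m23 * k33 = 0 ->
  m32 * k22 + m33 * k32 = 0 -> m32 * k23 + m33 * k33 = 1 ->
  let det := k22 * k33 - k23 * k32 in
  det * m22 = k33 /\ det * m23 = - k23 /\ det * m32 = - k32 /\ det * m33 = k22.
Proof.
  intros H1 H2 H3 H4 det; unfold det; repeat split.
  - transitivity ((m22 * k22 + m23 * k32) * k33 - (m22 * k23 + m23 * k33) * k32); [ring|].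
    rewrite H1, H2; ring.
  - transitivity ((m22 * k23 + m23 * k33) * k22 - (m22 * k22 + m23 * k32) * k23); [ring|].
    rewrite H1, H2; ring.
  - transitivity ((m32 * k22 + m33 * k32) * k33 - (m32 * k23 + m33 * k33) * k32); [ring|].
    rewrite H3, H4; ring.
  - transitivity ((m32 * k23 + m33 * k33) * k22 - (m32 * k22 + m33 * k32) * k23); [ring|].
    rewrite H3, H4; ring.
Qed.

Lemma right_inverse2_apply (m22 m23 m32 m33 k22 k23 k32 k33 w2 w3 : R) :
  m22 * k22 + m23 * k32 = 1 -> m22 * k23 + m23 * k33 = 0 ->
  m32 * k22 + m33 * k32 = 0 -> m32 * k23 + m33 * k33 = 1 ->
  m22 * (k22 * w2 + k23 * w3) + m23 * (k32 * w2 + k33 * w3) = w2 /\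
  m32 * (k22 * w2 + k23 * w3) + m33 * (k32 * w2 + k33 * w3) = w3.
Proof.
  intros H1 H2 H3 H4; split.
  - transitivity ((m22 * k22 + m23 * k32) * w2 + (m22 * k23 + m23 * k33) * w3); [ring|].
    rewrite H1, H2; ring.
  - transitivity ((m32 * k22 + m33 * k32) * w2 + (m32 * k23 + m33 * k33) * w3); [ring|].
    rewrite H3, H4; ring.
Qed.

Lemma observer_gain_eq (m11 m22 m23 m32 m33 k11 k22 k23 k32 k33 G1 G2 G3 : R) :
  0 < m22 -> 0 < m33 ->
  m11 * k11 = 1 /\
  m22 * k22 + m23 * k32 = 1 /\ m22 * k23 + m23 * k33 = 0 /\
  m32 * k22 + m33 * k32 = 0 /\ m32 * k23 + m33 * k33 = 1 ->
  k23 * k32 < k22 * k33 ->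
  let sig := sigma_ship k22 k23 k32 k33 in
  T11 G1 k11 k22 k23 k32 k33 = sig * G1 * m11 /\
  T22 G2 k22 = sig * G2 * m22 /\ T23 G2 k22 k23 k33 = sig * G2 * m23 /\
  T32 G3 k22 k32 k33 = sig * G3 * m32 /\ T33 G3 k33 = sig * G3 * m33.
Proof.
  intros Hm22 Hm33 [I1 [I2 [I3 [I4 I5]]]] Hk sig.
  destruct (right_inverse2_adj _ _ _ _ _ _ _ _ I2 I3 I4 I5) as [A22 [A23 [A32 A33]]].
  set (det := k22 * k33 - k23 * k32) in *.
  assert (Hdet : 0 < det) by (unfold det; lra).
  assert (Hk22 : 0 < k22) by (rewrite <- A33; apply Rmult_lt_0_compat; assumption).
  assert (Hk33 : 0 < k33) by (rewrite <- A22; apply Rmult_lt_0_compat; assumption).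
  assert (Hk11 : k11 <> 0) by (intros ->; lra).
  assert (M11 : m11 = / k11) by (apply (Rmult_eq_reg_r k11); [rewrite I1, Rinv_l; [reflexivity|] |]; exact Hk11).
  assert (M22 : m22 = k33 / det) by (rewrite <- A22; field; lra).
  assert (M23 : m23 = - k23 / det) by (rewrite <- A23; field; lra).
  assert (M32 : m32 = - k32 / det) by (rewrite <- A32; field; lra).
  assert (M33 : m33 = k22 / det) by (rewrite <- A33; field; lra).
  unfold sig, T11, T22, T23, T32, T33, sigma_ship.
  rewrite M11, M22, M23, M32, M33; unfold det.
  repeat split; field; repeat split; lra.
Qed.

Section ObserverError.

Context {m11 m22 m23 m32 m33 k11 k22 k23 k32 k33 : R} {h : hydro} {G1 G2 G3 : R}
  {u v r zeta1 zeta2 zeta3 ta1 ta2 ta3 td1 td2 td3 dtd1 dtd2 dtd3 : R -> R}.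

Let sig := sigma_ship k22 k23 k32 k33.
Let T11' := T11 G1 k11 k22 k23 k32 k33.
Let T22' := T22 G2 k22.
Let T23' := T23 G2 k22 k23 k33.
Let T32' := T32 G3 k22 k32 k33.
Let T33' := T33 G3 k33.

Let err1 t := td1 t - (zeta1 t + T11' * u t).
Let err2 t := td2 t - (zeta2 t + (T22' * v t + T23' * r t)).
Let err3 t := td3 t - (zeta3 t + (T32' * v t + T33' * r t)).

Let innov1 t := ta1 t + (zeta1 t + T11' * u t)
  - Dnu1 h (u t) (v t) (r t) - Cnu1 m11 m22 m23 (u t) (v t) (r t).
Let innov2 t := ta2 t + (zeta2 t + (T22' * v t + T23' * r t))
  - Dnu2 h (u t) (v t) (r t) - Cnu2 m11 m22 m23 (u t) (v t) (r t).
Let innov3 t := ta3 t + (zeta3 t + (T32' * v t + T33' * r t))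
  - Dnu3 h (u t) (v t) (r t) - Cnu3 m11 m22 m23 (u t) (v t) (r t).

Hypothesis Hinv : m11 * k11 = 1 /\
  m22 * k22 + m23 * k32 = 1 /\ m22 * k23 + m23 * k33 = 0 /\
  m32 * k22 + m33 * k32 = 0 /\ m32 * k23 + m33 * k33 = 1.
Hypothesis Hgain_eq : T11' = sig * G1 * m11 /\
  T22' = sig * G2 * m22 /\ T23' = sig * G2 * m23 /\
  T32' = sig * G3 * m32 /\ T33' = sig * G3 * m33.
Hypothesis Hnu_der : forall t, 0 < t -> ex_derive u t /\ ex_derive v t /\ ex_derive r t.
Hypothesis Hdyn : forall t, 0 < t ->
  m11 * Derive u t + Dnu1 h (u t) (v t) (r t) + Cnu1 m11 m22 m23 (u t) (v t) (r t)
    = ta1 t + td1 t /\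
  m22 * Derive v t + m23 * Derive r t + Dnu2 h (u t) (v t) (r t)
    + Cnu2 m11 m22 m23 (u t) (v t) (r t) = ta2 t + td2 t /\
  m32 * Derive v t + m33 * Derive r t + Dnu3 h (u t) (v t) (r t)
    + Cnu3 m11 m22 m23 (u t) (v t) (r t) = ta3 t + td3 t.
Hypothesis Hobs : forall t, 0 < t ->
  is_derive zeta1 t (- (T11' * (k11 * innov1 t))) /\
  is_derive zeta2 t (- (T22' * (k22 * innov2 t + k23 * innov3 t)
                        + T23' * (k32 * innov2 t + k33 * innov3 t))) /\
  is_derive zeta3 t (- (T32' * (k22 * innov2 t + k23 * innov3 t)
                        + T33' * (k32 * innov2 t + k33 * innov3 t))).
Hypothesis Htd_der : forall t, 0 < t ->
  is_derive td1 t (dtd1 t) /\ is_derive td2 t (dtd2 t) /\ is_derive td3 t (dtd3 t).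

Lemma innovation_eq t : 0 < t ->
  innov1 t = m11 * Derive u t - err1 t /\
  innov2 t = m22 * Derive v t + m23 * Derive r t - err2 t /\
  innov3 t = m32 * Derive v t + m33 * Derive r t - err3 t.
Proof.
  intros Ht; destruct (Hdyn t Ht) as [D1 [D2 D3]].
  unfold innov1, innov2, innov3, err1, err2, err3; repeat split; lra.
Qed.

Lemma observer_state_derivative t : 0 < t ->
  is_derive zeta1 t (sig * G1 * err1 t - T11' * Derive u t) /\
  is_derive zeta2 t (sig * G2 * err2 t - (T22' * Derive v t + T23' * Derive r t)) /\
  is_derive zeta3 t (sig * G3 * err3 t - (T32' * Derive v t + T33' * Derive r t)).
Proof.
  intros Ht.
  destruct (Hobs t Ht) as [Z1 [Z2 Z3]].
  destruct (innovation_eq t Ht) as [W1 [W2 W3]].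
  destruct Hinv as [I1 [I2 [I3 [I4 I5]]]].
  destruct (right_inverse2_apply _ _ _ _ _ _ _ _ (innov2 t) (innov3 t) I2 I3 I4 I5) as [P2 P3].
  destruct Hgain_eq as [E11 [E22 [E23 [E32 E33]]]].
  rewrite E11 in Z1 |- *; rewrite E22, E23 in Z2 |- *; rewrite E32, E33 in Z3 |- *.
  split; [|split].
  - replace (sig * G1 * err1 t - sig * G1 * m11 * Derive u t)
      with (- (sig * G1 * m11 * (k11 * innov1 t))); [exact Z1|].
    transitivity (- (sig * G1 * ((m11 * k11) * innov1 t))); [ring|].
    rewrite I1, W1; ring.
  - replace (sig * G2 * err2 t - (sig * G2 * m22 * Derive v t + sig * G2 * m23 * Derive r t))
      with (- (sig * G2 * m22 * (k22 * innov2 t + k23 * innov3 t)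
               + sig * G2 * m23 * (k32 * innov2 t + k33 * innov3 t))); [exact Z2|].
    transitivity (- (sig * G2 * (m22 * (k22 * innov2 t + k23 * innov3 t)
                                 + m23 * (k32 * innov2 t + k33 * innov3 t)))); [ring|].
    rewrite P2, W2; ring.
  - replace (sig * G3 * err3 t - (sig * G3 * m32 * Derive v t + sig * G3 * m33 * Derive r t))
      with (- (sig * G3 * m32 * (k22 * innov2 t + k23 * innov3 t)
               + sig * G3 * m33 * (k32 * innov2 t + k33 * innov3 t))); [exact Z3|].
    transitivity (- (sig * G3 * (m32 * (k22 * innov2 t + k23 * innov3 t)
                                 + m33 * (k32 * innov2 t + k33 * innov3 t)))); [ring|].
    rewrite P3, W3; ring.
Qed.

Lemma observer_error_derivative t : 0 < t ->
  is_derive err1 t (dtd1 t - sig * G1 * err1 t) /\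
  is_derive err2 t (dtd2 t - sig * G2 * err2 t) /\
  is_derive err3 t (dtd3 t - sig * G3 * err3 t).
Proof.
  intros Ht.
  destruct (Hnu_der t Ht) as [Hu [Hv Hr]].
  apply Derive_correct in Hu; apply Derive_correct in Hv; apply Derive_correct in Hr.
  destruct (observer_state_derivative t Ht) as [Z1 [Z2 Z3]].
  destruct (Htd_der t Ht) as [Q1 [Q2 Q3]].
  split; [|split].
  - replace (dtd1 t - sig * G1 * err1 t)
      with (dtd1 t - ((sig * G1 * err1 t - T11' * Derive u t) + T11' * Derive u t)) by ring.
    apply (is_derive_minus td1 (fun s => zeta1 s + T11' * u s)); [exact Q1|].
    apply (is_derive_plus zeta1 (fun s => T11' * u s)); [exact Z1|].
    apply is_derive_scal; exact Hu.
  - replace (dtd2 t - sig * G2 * err2 t)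
      with (dtd2 t - ((sig * G2 * err2 t - (T22' * Derive v t + T23' * Derive r t))
                      + (T22' * Derive v t + T23' * Derive r t))) by ring.
    apply (is_derive_minus td2 (fun s => zeta2 s + (T22' * v s + T23' * r s))); [exact Q2|].
    apply (is_derive_plus zeta2 (fun s => T22' * v s + T23' * r s)); [exact Z2|].
    apply (is_derive_plus (fun s => T22' * v s) (fun s => T23' * r s));
      apply is_derive_scal; assumption.
  - replace (dtd3 t - sig * G3 * err3 t)
      with (dtd3 t - ((sig * G3 * err3 t - (T32' * Derive v t + T33' * Derive r t))
                      + (T32' * Derive v t + T33' * Derive r t))) by ring.
    apply (is_derive_minus td3 (fun s => zeta3 s + (T32' * v s + T33' * r s))); [exact Q3|].
    apply (is_derive_plus zeta3 (fun s => T32' * v s + T33' * r s)); [exact Z3|].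
    apply (is_derive_plus (fun s => T32' * v s) (fun s => T33' * r s));
      apply is_derive_scal; assumption.
Qed.

End ObserverError.

Theorem mainTheorem2
  (* mass matrix M and its inverse K = M^-1 *)
  (m11 m22 m23 m32 m33 : R)
  (k11 k22 k23 k32 k33 : R)
  (* hydrodynamic constants *)
  (h : hydro)
  (* adaptive gains and disturbance-derivative bound *)
  (G1 G2 G3 theta : R)
  (* state nu = (u,v,r), observer state zeta, control tau, disturbance tau_d and its derivative *)
  (u v r zeta1 zeta2 zeta3 ta1 ta2 ta3 td1 td2 td3 dtd1 dtd2 dtd3 : R -> R)
  (* M symmetric, positive entries, positive definite *)
  (Hm_pos : 0 < m11 /\ 0 < m22 /\ 0 < m23 /\ 0 < m32 /\ 0 < m33)
  (Hm_sym : m23 = m32)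
  (Hm_pd : forall x1 x2 x3, (x1 <> 0 \/ x2 <> 0 \/ x3 <> 0) ->
      0 < m11 * x1 ^ 2 + m22 * x2 ^ 2 + (m23 + m32) * x2 * x3 + m33 * x3 ^ 2)
  (* K is the inverse of M:  M K = I *)
  (Hinv : m11 * k11 = 1 /\
          m22 * k22 + m23 * k32 = 1 /\ m22 * k23 + m23 * k33 = 0 /\
          m32 * k22 + m33 * k32 = 0 /\ m32 * k23 + m33 * k33 = 1)
  (Hk : k23 * k32 < k22 * k33)
  (HG : 0 < G1 /\ 0 < G2 /\ 0 < G3)
  (* ship dynamics  M nu' + D(nu) nu + C(nu) nu = tau + tau_d  for t > 0 *)
  (Hnu_der : forall t, 0 < t -> ex_derive u t /\ ex_derive v t /\ ex_derive r t)
  (Hdyn : forall t, 0 < t ->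
      m11 * Derive u t + Dnu1 h (u t) (v t) (r t) + Cnu1 m11 m22 m23 (u t) (v t) (r t)
        = ta1 t + td1 t /\
      m22 * Derive v t + m23 * Derive r t + Dnu2 h (u t) (v t) (r t)
        + Cnu2 m11 m22 m23 (u t) (v t) (r t) = ta2 t + td2 t /\
      m32 * Derive v t + m33 * Derive r t + Dnu3 h (u t) (v t) (r t)
        + Cnu3 m11 m22 m23 (u t) (v t) (r t) = ta3 t + td3 t)
  (* observer  zeta' = - T M^-1 (tau + hat tau_d - D nu - C nu),
     with  hat tau_d = zeta + T nu,  for t > 0 *)
  (Hobs : forall t, 0 < t ->
      let T11' := T11 G1 k11 k22 k23 k32 k33 in
      let T22' := T22 G2 k22 in
      let T23' := T23 G2 k22 k23 k33 in
      let T32' := T32 G3 k22 k32 k33 in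
      let T33' := T33 G3 k33 in
      let e1 := zeta1 t + T11' * u t in
      let e2 := zeta2 t + (T22' * v t + T23' * r t) in
      let e3 := zeta3 t + (T32' * v t + T33' * r t) in
      let w1 := ta1 t + e1 - Dnu1 h (u t) (v t) (r t) - Cnu1 m11 m22 m23 (u t) (v t) (r t) in
      let w2 := ta2 t + e2 - Dnu2 h (u t) (v t) (r t) - Cnu2 m11 m22 m23 (u t) (v t) (r t) in
      let w3 := ta3 t + e3 - Dnu3 h (u t) (v t) (r t) - Cnu3 m11 m22 m23 (u t) (v t) (r t) in
      let p1 := k11 * w1 in
      let p2 := k22 * w2 + k23 * w3 in
      let p3 := k32 * w2 + k33 * w3 in
      is_derive zeta1 t (- (T11' * p1)) /\
      is_derive zeta2 t (- (T22' * p2 + T23' * p3)) /\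
      is_derive zeta3 t (- (T32' * p2 + T33' * p3)))
  (* solution defined for t >= 0: right-continuity at 0 *)
  (Hcont0 : filterlim u (at_right 0) (locally (u 0)) /\
            filterlim v (at_right 0) (locally (v 0)) /\
            filterlim r (at_right 0) (locally (r 0)) /\
            filterlim zeta1 (at_right 0) (locally (zeta1 0)) /\
            filterlim zeta2 (at_right 0) (locally (zeta2 0)) /\
            filterlim zeta3 (at_right 0) (locally (zeta3 0)) /\
            filterlim td1 (at_right 0) (locally (td1 0)) /\
            filterlim td2 (at_right 0) (locally (td2 0)) /\
            filterlim td3 (at_right 0) (locally (td3 0)))
  (* tau_d continuously differentiable with  ||tau_d'(t)|| <= theta *)
  (Htd_der : forall t, 0 < t ->
      is_derive td1 t (dtd1 t) /\ is_derive td2 t (dtd2 t) /\ is_derive td3 t (dtd3 t))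
  (Htd_C1 : forall t, 0 < t ->
      continuous dtd1 t /\ continuous dtd2 t /\ continuous dtd3 t)
  (Htd_bound : forall t, 0 < t -> nrm (dtd1 t) (dtd2 t) (dtd3 t) <= theta)
  (Hgain : lam_min G1 G2 G3 * sigma_ship k22 k23 k32 k33 > 1 / 2) :
  let a := 2 * lam_min G1 G2 G3 * sigma_ship k22 k23 k32 k33 - 1 in
  let rb := theta / sqrt a in
  (* estimation error z = tau_d - hat tau_d *)
  let e1 := fun t => td1 t - (zeta1 t + T11 G1 k11 k22 k23 k32 k33 * u t) in
  let e2 := fun t => td2 t - (zeta2 t + (T22 G2 k22 * v t + T23 G2 k22 k23 k33 * r t)) in
  let e3 := fun t => td3 t - (zeta3 t + (T32 G3 k22 k32 k33 * v t + T33 G3 k33 * r t)) in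
  forall t, 0 <= t ->
    nrm (e1 t) (e2 t) (e3 t) ^ 2
      <= exp (- a * t) * nrm (e1 0) (e2 0) (e3 0) ^ 2 + rb ^ 2 * (1 - exp (- a * t)).
Proof.
  intros a rb e1 e2 e3 t Ht.
  destruct Hm_pos as [_ [Hm22 [_ [_ Hm33]]]].
  destruct HG as [HG1 [HG2 HG3]].
  destruct (lam_min_le G1 G2 G3) as [HL1 [HL2 HL3]].
  pose proof (lam_min_pos G1 G2 G3 HG1 HG2 HG3) as Hlam.
  set (lam := lam_min G1 G2 G3) in *; set (sig := sigma_ship k22 k23 k32 k33) in *.
  assert (Hsig : 0 < sig) by nra.
  assert (Ha : 0 < a) by (unfold a; lra).
  pose proof (observer_error_derivative Hinv
    (observer_gain_eq _ _ _ _ _ _ _ _ _ _ G1 G2 G3 Hm22 Hm33 Hinv Hk)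
    Hnu_der Hdyn Hobs Htd_der) as Herr.
  destruct Hcont0 as [Cu [Cv [Cr [Cz1 [Cz2 [Cz3 [Ct1 [Ct2 Ct3]]]]]]]].
  rewrite !nrm_sqr; unfold rb; rewrite sqr_div_sqrt by exact Ha.
  enough (Hbound : nrm2 (e1 t) (e2 t) (e3 t) <= exp (- a * (t - 0)) * nrm2 (e1 0) (e2 0) (e3 0)
                     + theta ^ 2 / a * (1 - exp (- a * (t - 0))))
    by (rewrite Rminus_0_r in Hbound; exact Hbound).
  apply (affine_differential_inequality (fun s => nrm2 (e1 s) (e2 s) (e3 s))
    (fun s => 2 * (e1 s * (dtd1 s - sig * G1 * e1 s) + e2 s * (dtd2 s - sig * G2 * e2 s)
                   + e3 s * (dtd3 s - sig * G3 * e3 s)))); [lra | | | | exact Ht].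
  - intros s Hs; destruct (Herr s Hs) as [D1 [D2 D3]]; exact (is_derive_nrm2 _ _ _ _ _ _ _ D1 D2 D3).
  - intros s Hs; unfold a; replace (2 * lam * sig) with (2 * (sig * lam)) by ring.
    apply nrm2_rate_le; try (apply Rmult_le_compat_l; lra).
    exact (nrm2_le_sqr _ _ _ _ (Htd_bound s Hs)).
  - apply right_continuous_nrm2; unfold e1, e2, e3; solve_right_continuous.
Qed.
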